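(* If $T\in\mathcal{T}_3$ is a tree with $n\ge 30$ vertices, then either there is an edge $e$ of $T$ with $2\alpha(T,e)\ge n\,\bar{\alpha}(T,e)$, or there is an internal vertex $v$ of $T$ with $2\alpha(T,v)\ge n\,\bar{\alpha}(T,v)$.
   Context: A leaf is a vertex of degree at most 1; an internal vertex has degree at least 2. $\mathcal{T}_3$ is the set of finite trees with at least one internal vertex in which every internal vertex has degree at least 3. A subtree is a nonempty vertex set inducing a connected subgraph. For a vertex $v$, $\alpha(T,v)$ and $\bar{\alpha}(T,v)$ are the numbers of subtrees of $T$ containing and not containing $v$, respectively; for an edge $e$, $\alpha(T,e)$ and $\bar{\alpha}(T,e)$ are the numbers of subtrees containing and not containing $e$ (i.e. containing both endpoints of $e$, or not). *)

From mathcomp Require Import all_boot.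
Set Implicit Arguments.
Unset Strict Implicit.
Unset Printing Implicit Defensive.

Section Trees.
Variable T : finType.
Variable adj : rel T.

Definition simple_graph : Prop := symmetric adj /\ irreflexive adj.

Definition adj_in (S : {set T}) : rel T :=
  fun x y => [&& x \in S, y \in S & adj x y].

Definition connected_set (S : {set T}) : bool :=
  [forall x in S, forall y in S, connect (adj_in S) x y].

Definition n_edges : nat := #|[set p : T * T | adj p.1 p.2]| %/ 2.

Definition is_tree : Prop :=
  simple_graph /\ 0 < #|T| /\ connected_set [set: T] /\ n_edges = #|T| - 1.

Definition deg (v : T) : nat := #|[set w | adj v w]|.
Definition internal (v : T) : bool := 2 <= deg v.

Definition in_T3 : Prop :=
  is_tree /\ (exists v, internal v) /\ (forall v, internal v -> 3 <= deg v).

Definition subtree (S : {set T}) : bool := (S != set0) && connected_set S.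

Definition alpha_v (v : T) : nat := #|[set S | subtree S & v \in S]|.
Definition alphabar_v (v : T) : nat := #|[set S | subtree S & v \notin S]|.
(* edge {u, w}: a subtree contains it iff it contains both endpoints *)
Definition alpha_e (u w : T) : nat :=
  #|[set S | subtree S & (u \in S) && (w \in S)]|.
Definition alphabar_e (u w : T) : nat :=
  #|[set S | subtree S & ~~ ((u \in S) && (w \in S))]|.
End Trees.

From mathcomp Require Import all_boot zify.
Set Implicit Arguments. Unset Strict Implicit. Unset Printing Implicit Defensive.

(* Root the tree at a leaf centroid v: every component of T - v contains at
   most half of the L leaves. As internal vertices have degree at least 3,
   fewer than n/2 vertices are internal, so L > n/2 >= 15 and v is internal.
   A subtree avoiding v has a unique vertex t closest to v; adding to it all
   vertices outside the branch below t except an arbitrary set of leaves gives,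
   injectively, 2^(L - L_t) subtrees through v, where L_t counts the leaves
   below t. Hence alphabar(v) 2^L <= alpha(v) sum_(t <> v) 2^L_t. Summing
   2^L_x over the branch below a child c of v gives at most 3 2^L_c, and since
   2^x / x increases and L_c <= L/2, the whole sum is at most
   3 L 2^(L/2) / (L/2), which is at most 2^(L+1) / n. *)

(* Convexity of 2^x: the sum is largest when all but one f d equal 1. *)
Lemma sum_exp2_le (I : eqType) (f : I -> nat) (s : seq I) :
  (forall d, d \in s -> 0 < f d) -> s != [::] ->
  exists m, \sum_(d <- s) f d = m + size s /\
            \sum_(d <- s) 2 ^ f d + 2 <= 2 * 2 ^ m + 2 * size s.
Proof.
elim: s => [|x s IH] // f_gt0 _.
have [x1 fx] : exists x1, f x = x1.+1.
  by exists (f x).-1; have := f_gt0 x (mem_head x s); lia.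
case: s IH f_gt0 => [|y s] IH f_gt0.
  by exists x1; rewrite !big_cons !big_nil fx /= expnS; lia.
have [|m [sum_f sum_2f]] := IH _ isT.
  by move=> d ds; apply: f_gt0; rewrite inE ds orbT.
exists (x1 + m); rewrite big_cons [X in X + 2 <= _]big_cons fx sum_f /=.
split; first by lia.
have X_gt0 : 0 < 2 ^ x1 by rewrite expn_gt0.
have M_gt0 : 0 < 2 ^ m by rewrite expn_gt0.
move: sum_2f X_gt0 M_gt0; rewrite expnS expnD /=.
move: (\sum_(d <- _) _) (2 ^ x1) (2 ^ m) => S X M; nia.
Qed.

Lemma sum_exp2_invariant (I : eqType) (f g : I -> nat) (s : seq I) :
  (forall d, d \in s -> 0 < f d /\ g d + 4 <= 3 * 2 ^ f d) -> 2 <= size s ->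
  2 ^ (\sum_(d <- s) f d) + \sum_(d <- s) g d + 4 <= 3 * 2 ^ (\sum_(d <- s) f d).
Proof.
move=> fg_bound size_s.
have s_nil : s != [::] by case: s size_s fg_bound.
have [m [sum_f sum_2f]] := sum_exp2_le (fun d ds => (fg_bound d ds).1) s_nil.
have sum_g : \sum_(d <- s) g d + 4 * size s <= 3 * \sum_(d <- s) 2 ^ f d.
  have <- : \sum_(d <- s) 4 = 4 * size s.
    by rewrite -sum1_size big_distrr; apply: eq_bigr.
  rewrite big_distrr -big_split /= big_seq_cond [X in _ <= X]big_seq_cond.
  by apply: leq_sum => d /andP[ds _]; have [_] := fg_bound d ds; lia.
have exp2_ge k : 2 <= k -> k + 2 <= 2 ^ k.
  elim: k => // k IHk; rewrite ltnS leq_eqVlt => /orP[/eqP <- //|].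
  by rewrite expnS => k_gt1; have := IHk k_gt1; lia.
have M_gt0 : 0 < 2 ^ m by rewrite expn_gt0.
rewrite sum_f expnD; move: size_s sum_2f sum_g (exp2_ge _ size_s) M_gt0.
set S := \sum_(d <- s) 2 ^ f d; set G := \sum_(d <- s) g d.
move: (size s) (2 ^ size s) (2 ^ m) => k K M; nia.
Qed.

Lemma exp2_mul_le x h : 0 < x -> x <= h -> 2 ^ x * h <= x * 2 ^ h.
Proof.
move=> x_gt0 /subnKC <-; elim: (h - x) => [|d IH]; first by rewrite addn0 mulnC.
rewrite addnS expnS mulnS.
have : 2 ^ x <= 2 ^ (x + d) by rewrite leq_exp2l // leq_addr.
by move: IH; move: (2 ^ x) (2 ^ (x + d)) => A B; nia.
Qed.

Lemma exp2_half_bound L n :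
  16 <= L -> n + 2 <= 2 * L -> 3 * L * n * 2 ^ L./2 <= L./2 * 2 ^ L.+1.
Proof.
move=> L_ge16 n_le.
have eL : L = L./2.*2 + odd L by rewrite addnC odd_double_half.
set h := L./2 in eL *.
have h_ge8 : 8 <= h by move: L_ge16; rewrite eL; case: (odd L) => /=; lia.
have exp_h : 2 ^ h * 2 ^ h.+1 <= 2 ^ L.+1.
  by rewrite -expnD leq_exp2l //; move: eL; case: (odd L) => /=; lia.
have exp2_ge k : 8 <= k -> 12 * (2 * k + 1) <= 2 ^ k.+1.
  elim: k => // k IH; rewrite ltnS leq_eqVlt => /orP[/eqP <- //|].
  by rewrite expnS => k_gt7; have := IH k_gt7; lia.
have L_le : L <= 2 * h + 1 by move: eL; case: (odd L) => /=; lia.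
apply: (@leq_trans (h * (2 ^ h * 2 ^ h.+1))); last by rewrite leq_mul2l exp_h orbT.
move: (exp2_ge _ h_ge8); move: (2 ^ h) (2 ^ h.+1) => A B lin_exp.
have n_le4h : n <= 4 * h by lia.
have : 3 * L * n <= 12 * h * (2 * h + 1) by nia.
have : 3 * L * n <= h * B by nia.
nia.
Qed.

Lemma ratio_of_weight_bounds n L a b S :
  16 <= L -> n + 2 <= 2 * L -> b * 2 ^ L <= a * S -> L./2 * S <= 3 * L * 2 ^ L./2 ->
  n * b <= 2 * a.
Proof.
move=> L_ge16 n_le b_le S_le; have num_le := exp2_half_bound L_ge16 n_le.
have hP_gt0 : 0 < L./2 * 2 ^ L by rewrite muln_gt0 expn_gt0 half_gt0 andbT; lia.
rewrite -(leq_pmul2r hP_gt0).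
have := leq_mul (leqnn (n * L./2)) b_le; have := leq_mul (leqnn (a * n)) S_le.
have := leq_mul (leqnn a) num_le; rewrite expnS.
move: (2 ^ L) (2 ^ L./2) L./2 => P Ph h; lia.
Qed.

Section Tree.
Variables (T : finType) (adj : rel T).
Hypothesis adj_sym : symmetric adj.
Hypothesis adj_irr : irreflexive adj.
Hypothesis adj_connect : forall x y, connect adj x y.
Hypothesis card_arcs : #|[set q : T * T | adj q.1 q.2]| %/ 2 = #|T| - 1.
Hypothesis internal_deg3 : forall v, internal adj v -> 3 <= deg adj v.

Definition leaves := ~: [set x | internal adj x].

Definition branch u c := [set x | connect (adj_in adj (~: [set u])) c x].

Lemma adj_in_sym (S : {set T}) : symmetric (adj_in adj S).
Proof. by move=> x y; rewrite /adj_in adj_sym andbCA. Qed.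

Lemma connected_setP (S : {set T}) :
  connected_set adj S -> {in S &, forall x y, connect (adj_in adj S) x y}.
Proof.
move=> /forallP S_conn x y xS yS.
by move/implyP/(_ xS)/forallP/(_ y)/implyP: (S_conn x); apply.
Qed.

Section Rooted.
Variable r : T.

Definition reaches_root_in x k : bool :=
  [exists s : k.-tuple T, path adj x s && (last x s == r)].

Lemma reaches_root_exists x : exists k, reaches_root_in x k.
Proof.
case/connectP: (adj_connect x r) => s s_path s_last; exists (size s).
by apply/existsP; exists (in_tuple s); rewrite /= s_path -s_last eqxx.
Qed.

Definition depth x := ex_minn (reaches_root_exists x).

Lemma depthP x : reaches_root_in x (depth x).
Proof. by rewrite /depth; case: ex_minnP. Qed.

Lemma depth_min x k : reaches_root_in x k -> depth x <= k.
Proof. by rewrite /depth; case: ex_minnP => m _; apply. Qed.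

Lemma depth_root : depth r = 0.
Proof.
apply/eqP; rewrite -leqn0; apply: depth_min.
by apply/existsP; exists [tuple]; rewrite /= eqxx.
Qed.

Lemma depth_eq0 x : depth x = 0 -> x = r.
Proof.
move=> dx0; have := depthP x; rewrite dx0 => /existsP[s /andP[_ /eqP]].
by rewrite (tuple0 s).
Qed.

Lemma depth_adj x y : adj x y -> depth x <= (depth y).+1.
Proof.
move=> xy; case/existsP: (depthP y) => s /andP[s_path s_last]; apply: depth_min.
by apply/existsP; exists [tuple of y :: s]; rewrite /= xy s_path.
Qed.

Lemma depth_down x : x != r -> exists2 y, adj x y & (depth y).+1 = depth x.
Proof.
move=> xr; case/existsP: (depthP x) => -[[|y s] s_size] /andP[/= x_path x_last].
  by rewrite x_last in xr.
case/andP: x_path => xy s_path; exists y => //; move/eqP: s_size => /= s_size.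
have : depth y <= size s.
  by apply: depth_min; apply/existsP; exists (in_tuple s); rewrite /= s_path x_last.
by have := depth_adj xy; lia.
Qed.

Definition parent x := odflt x [pick y | adj x y && ((depth y).+1 == depth x)].

Lemma parentP x : x != r -> adj x (parent x) /\ (depth (parent x)).+1 = depth x.
Proof.
move=> xr; rewrite /parent; case: pickP => [y /andP[xy /eqP //]|no_y].
by case: (depth_down xr) => y xy dy; have := no_y y; rewrite xy dy eqxx.
Qed.

Lemma adj_parent x : x != r -> adj x (parent x).
Proof. by case/parentP. Qed.

Lemma depth_gt0 x : x != r -> 0 < depth x.
Proof. by case/parentP=> _ <-. Qed.

Lemma depth_parent x : x != r -> depth (parent x) = (depth x).-1.
Proof. by case/parentP=> _ <-. Qed.

Lemma neq_root_of_depth x : 0 < depth x -> x != r.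
Proof. by apply: contraTneq => ->; rewrite depth_root. Qed.

Definition parent_arcs := [set (x, parent x) | x in [set~ r]].

Lemma mem_parent_arcs a b : ((a, b) \in parent_arcs) = (a != r) && (b == parent a).
Proof.
apply/imsetP/andP => [[x xr [-> ->]]|[ar /eqP ->]]; last by exists a; rewrite ?in_setC1.
by rewrite -in_setC1.
Qed.

(* Both orientations of the #|T| - 1 parent arcs are arcs of adj; together
   with the count of arcs this leaves no room for any other edge. *)
Lemma parent_edge x y : adj x y ->
  (x != r) && (y == parent x) || (y != r) && (x == parent y).
Proof.
move=> xy; apply/negPn/negP => not_parent.
pose swap (q : T * T) := (q.2, q.1).
have swap_inj : injective swap by move=> [? ?] [? ?] [-> ->].
pose P := parent_arcs :|: swap @^-1: parent_arcs.
have disj : parent_arcs :&: swap @^-1: parent_arcs = set0.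
  apply/setP => -[a b]; rewrite !inE !mem_parent_arcs /=.
  apply/negP => /andP[/andP[ar /eqP ba] /andP[br /eqP ab]].
  have := depth_parent ar; have := depth_parent br; have := depth_gt0 ar.
  by rewrite -ba -ab; lia.
have card_P : #|P| = (#|T|.-1).*2.
  have := cardsUI parent_arcs (swap @^-1: parent_arcs).
  rewrite disj cards0 card_preimset // card_imset ?cardsC1 => [|u v [] //].
  by rewrite addn0 addnn.
have xy_P : (x, y) \notin P by rewrite !inE !mem_parent_arcs.
have yx_P : (y, x) \notin (x, y) |: P.
  rewrite in_setU1 negb_or; apply/andP; split.
    by apply/eqP => -[yx _]; rewrite yx adj_irr in xy.
  by rewrite !inE !mem_parent_arcs orbC.
have sub : (y, x) |: ((x, y) |: P) \subset [set q : T * T | adj q.1 q.2].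
  apply/subsetP => -[u v]; rewrite !inE !mem_parent_arcs !xpair_eqE /=.
  case/orP => [/andP[/eqP -> /eqP ->]|]; first by rewrite adj_sym.
  case/orP => [/andP[/eqP -> /eqP -> //]|].
  by case/orP => /andP[? /eqP ->]; [|rewrite adj_sym]; apply: adj_parent.
have := subset_leq_card sub.
rewrite cardsU1 (negbTE yx_P) cardsU1 (negbTE xy_P) card_P.
have : 0 < #|T| by apply/card_gt0P; exists x.
by move: card_arcs; lia.
Qed.

Definition desc t :=
  [set x | (depth t <= depth x) && (iter (depth x - depth t) parent x == t)].

Lemma depth_iter_parent k x : k <= depth x -> depth (iter k parent x) = depth x - k.
Proof.
elim: k => [|k IH] k_le; first by rewrite subn0.
rewrite iterS depth_parent; first by rewrite IH ?(ltnW k_le) //; lia.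
by apply: neq_root_of_depth; rewrite IH ?(ltnW k_le) //; lia.
Qed.

Lemma descP x t : reflect (exists2 k, k <= depth x & iter k parent x = t) (x \in desc t).
Proof.
apply: (iffP idP) => [|[k k_le <-]].
  by rewrite inE => /andP[_ /eqP <-]; exists (depth x - depth t); rewrite ?leq_subr.
by rewrite inE depth_iter_parent // leq_subr /= subKn.
Qed.

Lemma desc_refl t : t \in desc t.
Proof. by apply/descP; exists 0. Qed.

Lemma depth_desc x t : x \in desc t -> depth t <= depth x.
Proof. by rewrite inE => /andP[]. Qed.

Lemma desc_depth_eq x t : x \in desc t -> depth x = depth t -> x = t.
Proof. by rewrite inE => + dxt; rewrite dxt subnn => /andP[_ /eqP]. Qed.

Lemma desc_neq_depth x t : x \in desc t -> x != t -> depth t < depth x.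
Proof.
move=> xt; rewrite ltn_neqAle depth_desc // andbT.
by apply: contra => /eqP dt; rewrite (desc_depth_eq xt).
Qed.

Lemma desc_neq_root x t : x \in desc t -> x != t -> x != r.
Proof. by move=> xt /(desc_neq_depth xt) dt; apply: neq_root_of_depth; lia. Qed.

Lemma desc_parent x t : x \in desc t -> x != t -> parent x \in desc t.
Proof.
case/descP => -[|k] k_le <-; first by rewrite eqxx.
move=> _; apply/descP; exists k; last by rewrite -iterSr.
have xr : x != r by apply: neq_root_of_depth; lia.
by rewrite depth_parent //; lia.
Qed.

Lemma desc_child y t : y != r -> parent y \in desc t -> y \in desc t.
Proof.
move=> yr /descP[k k_le <-]; apply/descP; exists k.+1; last by rewrite iterSr.
by move: k_le; rewrite depth_parent //; have := depth_gt0 yr; lia.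
Qed.

Lemma desc_trans x y t : x \in desc y -> y \in desc t -> x \in desc t.
Proof.
move=> /descP[k1 k1_le <-] /descP[k2 k2_le <-]; apply/descP; exists (k2 + k1).
  by move: k2_le; rewrite depth_iter_parent //; lia.
by rewrite iterD.
Qed.

Lemma desc_root x : x \in desc r.
Proof.
apply/descP; exists (depth x) => //.
by apply: depth_eq0; rewrite depth_iter_parent // subnn.
Qed.

Lemma parent_notin_desc t : t != r -> parent t \notin desc t.
Proof.
move=> tr; apply/negP => /depth_desc; rewrite depth_parent //.
by have := depth_gt0 tr; lia.
Qed.

Lemma root_notin_desc t : t != r -> r \notin desc t.
Proof.
move=> tr; apply/negP => /depth_desc; rewrite depth_root.
by have := depth_gt0 tr; lia.
Qed.

Lemma desc_boundary x y t : adj x y -> x \in desc t -> y \notin desc t ->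
  [/\ x = t, t != r & y = parent t].
Proof.
move=> xy xt yt.
case/orP: (parent_edge xy) => /andP[xr /eqP y_def].
  case: (x =P t) => [x_t|/eqP x_t]; first by subst.
  by have := desc_parent xt x_t; rewrite -y_def (negbTE yt).
by have := @desc_child y t xr; rewrite -y_def xt (negbTE yt) => /(_ isT).
Qed.

Lemma desc_anc_uniq x a b : x \in desc a -> x \in desc b -> depth a = depth b -> a = b.
Proof.
by move=> + + dab; rewrite !inE dab => /andP[_ /eqP <-] /andP[_ /eqP].
Qed.

Definition parent_closed t (S : {set T}) := {in S, forall x, x != t -> parent x \in S}.

Lemma connect_to_top (S : {set T}) t : t \in S -> S \subset desc t ->
  parent_closed t S -> {in S, forall x, connect (adj_in adj S) x t}.
Proof.
move=> tS S_desc S_closed x; move: {2}(depth x) (leqnn (depth x)) => n.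
elim: n x => [|n IH] x x_le xS; have xt := subsetP S_desc x xS.
  by rewrite (desc_depth_eq xt) //; have := depth_desc xt; lia.
have [-> //|x_t] := eqVneq x t.
have pxS := S_closed x xS x_t.
apply: connect_trans (connect1 _) (IH _ _ pxS).
  by rewrite /adj_in xS pxS adj_parent // (desc_neq_root xt).
by rewrite depth_parent ?(desc_neq_root xt) //; lia.
Qed.

Lemma connected_of_parent_closed (S : {set T}) t : t \in S -> S \subset desc t ->
  parent_closed t S -> connected_set adj S.
Proof.
move=> tS S_desc S_closed; apply/forallP => x; apply/implyP => xS.
apply/forallP => y; apply/implyP => yS.
apply: connect_trans (connect_to_top tS S_desc S_closed xS) _.
by rewrite (sym_connect_sym (adj_in_sym S)) connect_to_top.
Qed.

Lemma connect_desc (S : {set T}) u y : parent u \notin S ->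
  connect (adj_in adj S) u y -> y \in desc u.
Proof.
move=> puS /connectP[s + ->].
suff : forall a, a \in desc u -> path (adj_in adj S) a s -> last a s \in desc u.
  by apply; apply: desc_refl.
elim: s => //= b s IH a a_desc /andP[/and3P[_ bS ab] s_path]; apply: IH s_path.
apply/negPn/negP => b_desc.
by case: (desc_boundary ab a_desc b_desc) => _ _ b_def; rewrite -b_def bS in puS.
Qed.

Lemma parent_closed_of_connected (S : {set T}) t : connected_set adj S -> t \in S ->
  S \subset desc t -> parent_closed t S.
Proof.
move=> S_conn tS S_desc x xS x_t; apply/negPn/negP => pxS.
have tx := connect_desc pxS (connected_setP S_conn xS tS).
have := desc_neq_depth (subsetP S_desc x xS) x_t; have := depth_desc tx; lia.
Qed.

(* A subtree avoiding the root hangs below its vertex of least depth. *)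
Lemma subtree_top (S : {set T}) : subtree adj S -> r \notin S ->
  exists2 t, t \in S & (t != r) && (S \subset desc t).
Proof.
case/andP => /set0Pn[x0 x0S] S_conn rS.
case: (arg_minnP depth x0S) => t tS t_min.
have tr : t != r by apply: contraNneq rS => <-.
exists t => //; rewrite tr; apply/subsetP => y yS.
apply: connect_desc (connected_setP S_conn tS yS).
apply/negP => /t_min; rewrite depth_parent //; have := depth_gt0 tr; lia.
Qed.

Definition children t := [set d | (d != r) && (parent d == t)].

Definition child_anc t x := iter (depth x - depth t).-1 parent x.

Lemma child_ancP t x : x \in desc t -> x != t ->
  child_anc t x \in children t /\ x \in desc (child_anc t x).
Proof.
move=> xt x_t; have := desc_neq_depth xt x_t => dtx.
have depth_anc : depth (child_anc t x) = (depth t).+1.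
  by rewrite /child_anc depth_iter_parent; lia.
split; last by apply/descP; exists (depth x - depth t).-1 => //; lia.
rewrite inE neq_root_of_depth ?depth_anc //=; move: xt; rewrite inE.
by rewrite /child_anc -iterS prednK ?subn_gt0 // => /andP[].
Qed.

Lemma depth_children d t : d \in children t -> depth d = (depth t).+1.
Proof. by rewrite inE => /andP[dr /eqP <-]; rewrite depth_parent // prednK ?depth_gt0. Qed.

Lemma children_desc d t : d \in children t -> d \in desc t.
Proof.
by rewrite inE => /andP[dr /eqP dt]; apply: desc_child => //; rewrite dt desc_refl.
Qed.

Lemma desc_children d t x : d \in children t -> x \in desc d ->
  [/\ x \in desc t, x != t & child_anc t x = d].
Proof.
move=> dt xd; have xt := desc_trans xd (children_desc dt).
have x_t : x != t.
  by apply: contraTneq (depth_desc xd) => ->; rewrite (depth_children dt) ltnn.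
split => //; have [anc_t x_anc] := child_ancP xt x_t.
by apply: desc_anc_uniq x_anc xd _; rewrite (depth_children dt) (depth_children anc_t).
Qed.

Lemma big_desc (F : T -> nat) t :
  \sum_(x in desc t) F x = F t + \sum_(d in children t) \sum_(x in desc d) F x.
Proof.
rewrite (bigD1 t) ?desc_refl //=; congr (_ + _).
rewrite (partition_big (child_anc t) (mem (children t))) => [|x /andP[xt x_t]].
  apply: eq_bigr => d dt; apply: eq_bigl => x.
  apply/idP/idP => [/andP[/andP[xt x_t] /eqP <-]|xd]; first by case: (child_ancP xt x_t).
  by case: (desc_children dt xd) => -> -> ->; rewrite eqxx.
by case: (child_ancP xt x_t).
Qed.

Lemma connect_from_top (S : {set T}) t : t \in S -> S \subset desc t ->
  parent_closed t S -> {in S, forall x, connect (adj_in adj S) t x}.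
Proof.
by move=> tS S_desc S_closed x xS; rewrite (sym_connect_sym (adj_in_sym S)) connect_to_top.
Qed.

Lemma desc_branch t : t != r -> desc t = branch (parent t) t.
Proof.
move=> tr; apply/setP => x; rewrite [in RHS]inE; apply/idP/idP => [xt|].
  have closed : parent_closed t (desc t) by move=> y; apply: desc_parent.
  apply: connect_sub (connect_from_top (desc_refl t) (subxx _) closed xt).
  move=> y z /and3P[yt zt yz]; apply: connect1; rewrite /adj_in yz !inE andbT.
  by apply/andP; split; apply: contraNneq (parent_notin_desc tr) => <-.
by apply: connect_desc; rewrite !inE eqxx.
Qed.

Lemma branch_root_child u : u \in children r -> branch u r = ~: desc u.
Proof.
move=> ur; have u_r : u != r by move: ur; rewrite inE => /andP[].
have r_closed : parent_closed r (~: desc u).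
  by move=> y; rewrite !in_setC => yu yr; apply: contra yu; apply: desc_child.
apply/setP => x; rewrite [x \in branch _ _]inE; apply/idP/idP => [|xu].
  case/connectP => s + ->.
  suff : forall a, a \notin desc u -> path (adj_in adj (~: [set u])) a s ->
      last a s \in ~: desc u by apply; apply: root_notin_desc.
  elim: s => [|b s IH] a au /=; first by rewrite in_setC.
  case/andP=> /and3P[_ bu ab] s_path; apply: IH s_path; apply/negP => bd.
  rewrite adj_sym in ab; have [b_u _ _] := desc_boundary ab bd au.
  by move: bu; rewrite !inE b_u eqxx.
have rS : r \in ~: desc u by rewrite in_setC root_notin_desc.
have S_desc : ~: desc u \subset desc r by apply/subsetP => y _; apply: desc_root.
apply: connect_sub (connect_from_top rS S_desc r_closed xu).
move=> y z /and3P[yu zu yz]; apply: connect1; rewrite /adj_in yz !inE andbT.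
rewrite !in_setC in yu zu.
by apply/andP; split; [apply: contraNneq yu|apply: contraNneq zu] => ->; apply: desc_refl.
Qed.

Lemma adjE x w : adj x w = (w \in children x) || (x != r) && (w == parent x).
Proof.
apply/idP/idP => [/parent_edge/orP[/andP[xr /eqP ->]|/andP[wr /eqP xw]]|].
- by rewrite xr eqxx orbT.
- by rewrite inE wr -xw eqxx.
rewrite inE => /orP[/andP[wr /eqP <-]|/andP[xr /eqP ->]]; last exact: adj_parent.
by rewrite adj_sym adj_parent.
Qed.

Lemma parent_notin_children x : x != r -> parent x \notin children x.
Proof.
move=> xr; rewrite inE; apply/negP => /andP[pr /eqP ppx].
have := depth_parent pr; rewrite ppx depth_parent //; have := depth_gt0 xr; lia.
Qed.

Lemma deg_nonroot x : x != r -> deg adj x = #|children x|.+1.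
Proof.
move=> xr; rewrite /deg (_ : [set w | adj x w] = parent x |: children x).
  by rewrite cardsU1 parent_notin_children.
by apply/setP => w; rewrite !inE adjE xr orbC inE.
Qed.

Lemma deg_root : deg adj r = #|children r|.
Proof.
rewrite /deg (_ : [set w | adj r w] = children r) //.
by apply/setP => w; rewrite inE adjE eqxx orbF.
Qed.

Lemma internal_parent y : y != r -> internal adj r -> internal adj (parent y).
Proof.
move=> yr r_int; have [-> //|pr] := eqVneq (parent y) r.
rewrite /internal deg_nonroot // ltnS card_gt0; apply/set0Pn; exists y.
by rewrite inE yr eqxx.
Qed.

Lemma sum_card_children : \sum_t #|children t| = #|T|.-1.
Proof.
symmetry; rewrite -(cardsC1 r) -sum1_card (partition_big parent predT) //=.
by apply: eq_bigr => t _; rewrite -sum1_card; apply: eq_bigl => d; rewrite !inE.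
Qed.

(* Count the edges by their lower endpoint: the root has at least three
   children and every other internal vertex at least two. *)
Lemma card_internal : internal adj r -> (2 * #|~: leaves|).+1 <= #|T|.-1.
Proof.
move=> r_int; rewrite -sum_card_children setCK -sum1_card big_mkcond big_distrr /=.
rewrite (bigD1 r) //= [X in _ <= X](bigD1 r) //= inE r_int -deg_root -addSn.
apply: leq_add; first exact: internal_deg3.
apply: leq_sum => t tr; rewrite inE; case: ifP => // t_int.
by have := internal_deg3 t_int; rewrite deg_nonroot.
Qed.

Definition top_subtrees t :=
  [set S : {set T} | [&& t \in S, S \subset desc t & connected_set adj S]].

Lemma alphabar_v_le : alphabar_v adj r <= \sum_(t in [set~ r]) #|top_subtrees t|.
Proof.
rewrite /alphabar_v -sum1_card.
apply: (@leq_trans (\sum_(S in [set S | subtree adj S & r \notin S])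
   \sum_(t in [set~ r]) (S \in top_subtrees t))).
  apply: leq_sum => S; rewrite inE => /andP[S_sub rS].
  case: (subtree_top S_sub rS) => t tS /andP[tr S_desc].
  rewrite (bigD1 t) ?in_setC1 //= inE tS S_desc.
  by case/andP: S_sub => _ ->.
rewrite exchange_big /=; apply: leq_sum => t _.
apply: (@leq_trans (\sum_S (S \in top_subtrees t))).
  by rewrite [X in X <= _]big_mkcond; apply: leq_sum => S _; case: ifP.
rewrite -sum1_card [X in _ <= X]big_mkcond; apply: leq_sum => S _.
by case: (S \in top_subtrees t).
Qed.

Definition extend_subtree t (S D : {set T}) := S :|: (~: desc t :\: D).

Lemma extend_subtreeK t (S D : {set T}) : S \subset desc t -> D \subset ~: desc t ->
  S = extend_subtree t S D :&: desc t /\ D = ~: desc t :\: extend_subtree t S D.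
Proof.
move=> /subsetP St /subsetP Dt; split; apply/setP => x.
all: move: (introT implyP (St x)) (introT implyP (Dt x)).
all: rewrite /extend_subtree ?(in_setI, in_setU, in_setD, in_setC).
all: by case: (x \in S); case: (x \in D); case: (x \in desc t).
Qed.

Lemma extend_subtree_subtree t (S D : {set T}) : t != r -> internal adj r ->
  S \in top_subtrees t -> D \subset leaves :\: desc t ->
  subtree adj (extend_subtree t S D) && (r \in extend_subtree t S D).
Proof.
move=> tr r_int; rewrite inE => /and3P[tS S_desc S_conn] /subsetP D_sub.
have S_closed := parent_closed_of_connected S_conn tS S_desc.
have notin_D x : internal adj x -> x \notin D.
  by move=> x_int; apply/negP => /D_sub; rewrite in_setD in_setC inE x_int andbF.
have rE : r \in extend_subtree t S D.
  by rewrite in_setU in_setD in_setC (notin_D _ r_int) root_notin_desc ?orbT.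
rewrite rE andbT /subtree; apply/andP; split; first by apply/set0Pn; exists r.
apply: (connected_of_parent_closed rE); first by apply/subsetP => y _; apply: desc_root.
move=> x; rewrite in_setU in_setD in_setC => /orP[xS|/andP[xD xt]] xr.
  have [-> | x_t] := eqVneq x t; last by rewrite in_setU S_closed.
  by rewrite in_setU in_setD in_setC notin_D ?internal_parent // parent_notin_desc ?orbT.
rewrite in_setU in_setD in_setC notin_D ?internal_parent //=.
by apply/orP; right; apply: contra xt; apply: desc_child.
Qed.

Lemma card_top_subtrees_mul t : t != r -> internal adj r ->
  #|top_subtrees t| * 2 ^ #|leaves :\: desc t| <= alpha_v adj r.
Proof.
move=> tr r_int; pose F (q : {set T} * {set T}) := extend_subtree t q.1 q.2.
pose Q := setX (top_subtrees t) (powerset (leaves :\: desc t)).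
have F_inj : {in Q &, injective F}.
  move=> [S1 D1] [S2 D2]; rewrite !in_setX !powersetE !inE /=.
  move=> /andP[/and3P[_ S1t _] D1t] /andP[/and3P[_ S2t _] D2t].
  rewrite /F /= => eqF.
  have [S1E D1E] := extend_subtreeK S1t (subset_trans D1t (subsetDr _ _)).
  have [S2E D2E] := extend_subtreeK S2t (subset_trans D2t (subsetDr _ _)).
  by congr pair; [rewrite S1E S2E | rewrite D1E D2E]; rewrite eqF.
have F_sub : F @: Q \subset [set S | subtree adj S & r \in S].
  apply/subsetP => _ /imsetP[[S D] + ->]; rewrite in_setX powersetE inE => /andP[].
  exact: extend_subtree_subtree.
have := subset_leq_card F_sub; rewrite card_in_imset // cardsX card_powerset.
by rewrite /alpha_v.
Qed.

Definition leaf_count t := #|leaves :&: desc t|.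

Definition leaf_weight t := \sum_(x in desc t) 2 ^ leaf_count x.

Lemma leaf_count_rec t :
  leaf_count t = (t \in leaves) + \sum_(d in children t) leaf_count d.
Proof.
have leaf_countE u : leaf_count u = \sum_(x in desc u) (x \in leaves).
  rewrite /leaf_count -sum1_card big_mkcond [RHS]big_mkcond /=.
  by apply: eq_bigr => x _; rewrite in_setI; case: (x \in leaves); case: (x \in desc u).
by rewrite leaf_countE big_desc; congr (_ + _); apply: eq_bigr => d _; rewrite leaf_countE.
Qed.

Lemma leaf_weight_rec t :
  leaf_weight t = 2 ^ leaf_count t + \sum_(d in children t) leaf_weight d.
Proof. exact: big_desc. Qed.

Lemma card_desc_children d t : d \in children t -> #|desc d| < #|desc t|.
Proof.
move=> dt; apply: proper_card; rewrite properE; apply/andP; split.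
  by apply/subsetP => x xd; apply: desc_trans xd (children_desc dt).
apply/subsetPn; exists t; first exact: desc_refl.
by apply/negP => /depth_desc; rewrite (depth_children dt) ltnn.
Qed.

(* Induction on the height of t; a non-root internal vertex has at least two
   children, as sum_exp2_invariant requires. *)
Lemma leaf_weight_bound t : t != r ->
  0 < leaf_count t /\ leaf_weight t + 4 <= 3 * 2 ^ leaf_count t.
Proof.
move: {2}#|desc t| (leqnn #|desc t|) => n; elim: n t => [|n IH] t t_le tr.
  by move: t_le; rewrite leqn0 cards_eq0 => /eqP dt; move: (desc_refl t); rewrite dt inE.
have deg_t := deg_nonroot tr.
have [no_children|[d0 d0t]] := set_0Vmem (children t).
  have t_leaf : t \in leaves by rewrite !inE /internal deg_t no_children cards0.
  by rewrite leaf_weight_rec leaf_count_rec no_children !big_set0 t_leaf.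
have t_int : internal adj t.
  by rewrite /internal deg_t ltnS card_gt0; apply/set0Pn; exists d0.
have IHd d : d \in children t ->
    0 < leaf_count d /\ leaf_weight d + 4 <= 3 * 2 ^ leaf_count d.
  move=> dt; apply: IH; first by have := card_desc_children dt; lia.
  by move: dt; rewrite inE => /andP[].
have t_notleaf : t \notin leaves by rewrite !inE t_int.
rewrite leaf_weight_rec leaf_count_rec (negbTE t_notleaf) add0n; split.
  by rewrite (bigD1 d0) //=; have := (IHd d0 d0t).1; lia.
rewrite -!big_enum; apply: sum_exp2_invariant => [d|].
  by rewrite mem_enum => /IHd.
by rewrite -cardE -ltnS -deg_t internal_deg3.
Qed.

Lemma desc_root_setT : desc r = [set: T].
Proof. by apply/setP => x; rewrite in_setT desc_root. Qed.

Lemma alphabar_v_mul_le : internal adj r ->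
  alphabar_v adj r * 2 ^ #|leaves| <= alpha_v adj r * \sum_(t in [set~ r]) 2 ^ leaf_count t.
Proof.
move=> r_int; rewrite big_distrr /=.
apply: (leq_trans (leq_mul alphabar_v_le (leqnn _))); rewrite big_distrl /=.
apply: leq_sum => t; rewrite in_setC1 => tr.
have -> : 2 ^ #|leaves| = 2 ^ #|leaves :\: desc t| * 2 ^ leaf_count t.
  by rewrite -expnD addnC cardsID.
by rewrite mulnA leq_mul2r card_top_subtrees_mul ?orbT.
Qed.

Lemma sum_exp2_leaf_count_nonroot :
  \sum_(t in [set~ r]) 2 ^ leaf_count t = \sum_(c in children r) leaf_weight c.
Proof.
have := leaf_weight_rec r; rewrite /leaf_weight desc_root_setT (bigD1 r) //= => /eqP.
by rewrite eqn_add2l => /eqP <-; apply: eq_bigl => x; rewrite in_setC1 in_setT.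
Qed.
End Rooted.

Lemma adj_children_root r y : adj r y -> y \in children r r.
Proof. by rewrite (adjE r) eqxx andFb orbF. Qed.

Lemma children_root_desc_disjoint r d u x : d \in children r r -> u \in children r r ->
  x \in desc r d -> x \in desc r u -> d = u.
Proof.
move=> dr ur xd xu.
by case: (desc_children dr xd) => _ _ <-; case: (desc_children ur xu) => _ _ ->.
Qed.

(* Take an arc (u, c) whose branch B(u, c) holds more than half of the leaves
   with B(u, c) as small as possible: every branch at c is then small. *)
Lemma leaf_centroid (v0 : T) :
  exists v, forall c, adj v c -> 2 * #|leaves :&: branch v c| <= #|leaves|.
Proof.
pose big_arc q := adj q.1 q.2 && (#|leaves| < 2 * #|leaves :&: branch q.1 q.2|).
have [q0 q0_big|no_big] := pickP big_arc; last first.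
  by exists v0 => c v0c; have := no_big (v0, c); rewrite /big_arc /= v0c ltnNge => /negbFE.
case: (arg_minnP (fun q : T * T => #|branch q.1 q.2|) q0_big) => -[u c] /=.
move=> /andP[/= uc uc_big] uc_min; exists c => y cy.
have uc' : u \in children c c by apply: adj_children_root; rewrite adj_sym.
have branch_uc := branch_root_child uc'.
move: (uc'); rewrite inE => /andP[u_c /eqP pu].
have [->|y_u] := eqVneq y u.
  rewrite (_ : branch c u = desc c u); last by rewrite desc_branch ?pu.
  move: uc_big; rewrite branch_uc.
  by have := cardsID (desc c u) leaves; rewrite setDE; lia.
have yc := adj_children_root cy.
move: (yc); rewrite inE => /andP[y_c /eqP py].
have branch_cy : branch c y = desc c y by rewrite desc_branch ?py.
have desc_sub : desc c y \subset branch u c.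
  rewrite branch_uc; apply/subsetP => x xy; rewrite in_setC; apply/negP => xu.
  by move: y_u; rewrite (children_root_desc_disjoint yc uc' xy xu) eqxx.
have card_lt : #|desc c y| < #|branch u c|.
  apply: proper_card; rewrite properE desc_sub; apply/subsetPn; exists c.
    by rewrite branch_uc in_setC root_notin_desc.
  exact: root_notin_desc.
have : ~~ big_arc (c, y).
  by apply/negP => /uc_min /=; rewrite branch_cy; lia.
by rewrite /big_arc /= cy /= -leqNgt.
Qed.

Section Centroid.
Variable v : T.
Hypothesis v_centroid : forall c, adj v c -> 2 * #|leaves :&: branch v c| <= #|leaves|.

Lemma leaf_count_centroid_child c : c \in children v v -> 2 * leaf_count v c <= #|leaves|.
Proof.
rewrite inE => /andP[c_v /eqP pc]; rewrite /leaf_count desc_branch // pc.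
by apply: v_centroid; rewrite adj_sym -{1}pc adj_parent.
Qed.

Lemma leaves_centroid :
  #|leaves| = (v \in leaves) + \sum_(c in children v v) leaf_count v c.
Proof. by rewrite -leaf_count_rec /leaf_count desc_root_setT setIT. Qed.

Lemma sum_leaf_count_centroid :
  2 * \sum_(c in children v v) leaf_count v c <= #|children v v| * #|leaves|.
Proof.
rewrite big_distrr -sum1_card big_distrl /=; apply: leq_sum => c cv.
by rewrite mul1n leaf_count_centroid_child.
Qed.

Lemma centroid_internal : 2 < #|leaves| -> internal adj v.
Proof.
move=> L_gt2; apply/negPn/negP => v_leaf.
have : #|children v v| * #|leaves| <= #|leaves|.
  by rewrite -[X in _ <= X]mul1n leq_mul2r -(deg_root v) leqNgt v_leaf orbT.
have := sum_leaf_count_centroid; have := leaves_centroid.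
by case: (v \in leaves); lia.
Qed.

Lemma centroid_weight_bound :
  #|leaves|./2 * \sum_(c in children v v) leaf_weight v c
    <= 3 * #|leaves| * 2 ^ #|leaves|./2.
Proof.
set h := #|leaves|./2; rewrite big_distrr /=.
apply: (@leq_trans (\sum_(c in children v v) 3 * leaf_count v c * 2 ^ h)).
  apply: leq_sum => c cv; have c_v : c != v by move: cv; rewrite inE => /andP[].
  have [lc_gt0 weight_le] := leaf_weight_bound c_v.
  have lc_le : leaf_count v c <= h.
    rewrite /h -(half_double (leaf_count v c)) half_leq //.
    by rewrite -mul2n leaf_count_centroid_child.
  have := exp2_mul_le lc_gt0 lc_le; move: weight_le.
  by move: (leaf_weight v c) (2 ^ leaf_count v c) (2 ^ h) (leaf_count v c) => W X Y l; nia.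
rewrite -big_distrl -big_distrr /= leq_mul2r leq_mul2l /=.
by rewrite [X in _ <= X]leaves_centroid leq_addl orbT.
Qed.
End Centroid.

Lemma centroid_alpha_v_bound w0 : internal adj w0 -> 30 <= #|T| ->
  exists v, internal adj v /\ #|T| * alphabar_v adj v <= 2 * alpha_v adj v.
Proof.
move=> w0_int n_ge30; have [v v_centroid] := leaf_centroid w0; exists v.
have n_le : #|T| + 2 <= 2 * #|leaves|.
  by have := card_internal w0_int; have := cardsC leaves; lia.
have v_int : internal adj v by apply: (centroid_internal v_centroid); lia.
split=> //.
have alpha_le := alphabar_v_mul_le v_int.
rewrite sum_exp2_leaf_count_nonroot in alpha_le.
have L_ge16 : 16 <= #|leaves| by lia.
exact: ratio_of_weight_bounds L_ge16 n_le alpha_le (centroid_weight_bound v_centroid).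
Qed.
End Tree.

Theorem mainTheorem10 (T : finType) (adj : rel T) :
  in_T3 adj -> 30 <= #|T| ->
  (exists u w, adj u w /\ 2 * alpha_e adj u w >= #|T| * alphabar_e adj u w)
  \/ (exists v, internal adj v /\ 2 * alpha_v adj v >= #|T| * alphabar_v adj v).
Proof.
move=> [[[adj_sym adj_irr] [_ [T_conn card_arcs]]] [[w0 w0_int] internal_deg3]] n_ge30.
have adj_connect x y : connect adj x y.
  have := connected_setP T_conn (in_setT x) (in_setT y).
  by rewrite (@eq_connect _ _ adj) // => a b; rewrite /adj_in !in_setT.
right.
exact: (centroid_alpha_v_bound adj_sym adj_irr adj_connect card_arcs internal_deg3 w0_int).
Qed.
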